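(* Let $p$ be a prime and $d,u$ positive integers with $u\ge2$ if $p=2$. Let $\Gamma=\mathrm{CS}(u,d,p)$ and $\Gamma_i=\mathrm{CS}(u+i-1,d,p)$ for $i\ge1$. For each positive integer $i$ set $\Gamma_i^*=\Gamma_{\lceil \log_p i\rceil+1}$. Then $\{\Gamma_i^*\}_{i\ge1}$ is an $N_p$-sequence for $\Gamma$; that is, $\Gamma=\Gamma_1^*\supseteq\Gamma_2^*\supseteq\cdots$ are normal subgroups of $\Gamma$ with $[\Gamma_i^*,\Gamma_j^*]\subseteq\Gamma_{i+j}^*$ and $(\Gamma_i^* )^p\subseteq \Gamma_{ip}^*$ for all $i,j\ge1$.
   Context: $\mathrm{CS}(i,d,p)=\{A\in \mathrm{Mat}_d(\mathbb{Z}_p)\mid A\equiv I_d \bmod p^i\}$ with $\mathbb{Z}_p$ the $p$-adic integers. $\lceil x\rceil$ is the least integer $\ge x$. For subgroups $A,B$, $[A,B]=\langle aba^{-1}b^{-1}\mid a\in A,b\in B\rangle$, and $A^p=\langle a^p\mid a\in A\rangle$. *)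

From HB Require Import structures.
From mathcomp Require Import all_boot all_order all_algebra.
From mathcomp Require Import boolp classical_sets.
Set Implicit Arguments. Unset Strict Implicit. Unset Printing Implicit Defensive.
Import Order.TTheory GRing.Theory Num.Theory.
Local Open Scope ring_scope.

(* The ring Z_p of p-adic integers, as the inverse limit of Z/p^(n+1)Z:     *)
(* a p-adic integer is a sequence (x_n) of integers with x_n in [0,p^(n+1)) *)
(* (normalised residues) and x_(n+1) = x_n mod p^(n+1).                     *)
(* To get a nontrivial ring for every p we use the base b = max(p,2)        *)
(* (as MathComp's 'Z_p does); in the statement p is prime so b = p.        *)


Lemma modz_mulmod (x a c : int) : modz (modz x (c * a)) a = modz x a.
Proof.
rewrite [in RHS](divz_eq x (c * a)) mulrA.
by rewrite modzMDl.
Qed.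

Section PAdic.
Variable p : nat.

Definition padic_base : nat := p.-2.+2.
Definition pmod (n : nat) : int := (padic_base ^ n.+1)%:Z.

Lemma pmodS n : pmod n.+1 = (padic_base%:Z) * pmod n.
Proof. by rewrite /pmod expnS PoszM. Qed.

Lemma pmod_neq0 n : pmod n != 0.
Proof. by rewrite /pmod eqz_nat expn_eq0 /padic_base. Qed.

Record padic := Padic {
  padic_seq : nat -> int;
  padic_seqP : forall n, modz (padic_seq n) (pmod n) = padic_seq n /\
                         modz (padic_seq n.+1) (pmod n) = padic_seq n }.

Lemma padic_ext (x y : padic) : padic_seq x =1 padic_seq y -> x = y.
Proof.
case: x => f fP; case: y => g gP /= /funext efg; subst g.
by rewrite (Prop_irrelevance fP gP).
Qed.

HB.instance Definition _ := gen_eqMixin padic.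
HB.instance Definition _ := gen_choiceMixin padic.


Definition compat (f : nat -> int) :=
  forall n, modz (f n.+1) (pmod n) = modz (f n) (pmod n).

Lemma mk_padicP (f : nat -> int) (fc : compat f) n :
  modz (modz (f n) (pmod n)) (pmod n) = modz (f n) (pmod n) /\
  modz (modz (f n.+1) (pmod n.+1)) (pmod n) = modz (f n) (pmod n).
Proof. by rewrite modz_mod pmodS modz_mulmod fc. Qed.

Definition mk_padic f (fc : compat f) : padic := Padic (mk_padicP fc).

Lemma padic_mod (x : padic) n : modz (padic_seq x n) (pmod n) = padic_seq x n.
Proof. by case: (padic_seqP x n). Qed.

Lemma padic_compat (x : padic) : compat (padic_seq x).
Proof. by move=> n; case: (padic_seqP x n) => -> ->. Qed.

Lemma const_compat (c : int) : compat (fun=> c).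
Proof. by []. Qed.

Lemma add_compat (x y : padic) :
  compat (fun n => padic_seq x n + padic_seq y n).
Proof.
move=> n; rewrite -modzDm (padic_compat x) (padic_compat y).
by rewrite modzDm.
Qed.

Lemma mul_compat (x y : padic) :
  compat (fun n => padic_seq x n * padic_seq y n).
Proof.
move=> n; rewrite -modzMm (padic_compat x) (padic_compat y).
by rewrite modzMm.
Qed.

Lemma opp_compat (x : padic) : compat (fun n => - padic_seq x n).
Proof.
by move=> n; rewrite -modzNm (padic_compat x) modzNm.
Qed.

Definition padic0 := mk_padic (const_compat 0).
Definition padic1 := mk_padic (const_compat 1).
Definition padic_add x y := mk_padic (add_compat x y).
Definition padic_mul x y := mk_padic (mul_compat x y).
Definition padic_opp x := mk_padic (opp_compat x).

Lemma padic_addA : associative padic_add.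
Proof.
move=> x y z; apply: padic_ext => n /=.
by rewrite modzDml modzDmr addrA.
Qed.

Lemma padic_addC : commutative padic_add.
Proof. by move=> x y; apply: padic_ext => n /=; rewrite addrC. Qed.

Lemma padic_add0 : left_id padic0 padic_add.
Proof.
by move=> x; apply: padic_ext => n /=; rewrite modzDml add0r padic_mod.
Qed.

Lemma padic_addN : left_inverse padic0 padic_opp padic_add.
Proof.
by move=> x; apply: padic_ext => n /=; rewrite modzDml addNr.
Qed.

HB.instance Definition _ := GRing.isZmodule.Build padic
  padic_addA padic_addC padic_add0 padic_addN.

Lemma padic_mulA : associative padic_mul.
Proof.
move=> x y z; apply: padic_ext => n /=.
by rewrite modzMml modzMmr mulrA.
Qed.

Lemma padic_mulC : commutative padic_mul.
Proof. by move=> x y; apply: padic_ext => n /=; rewrite mulrC. Qed.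

Lemma padic_mul1 : left_id padic1 padic_mul.
Proof.
by move=> x; apply: padic_ext => n /=; rewrite modzMml mul1r padic_mod.
Qed.

Lemma padic_mulDl : left_distributive padic_mul padic_add.
Proof.
move=> x y z; apply: padic_ext => n /=.
by rewrite modzMml modzDm mulrDl.
Qed.

Lemma padic1_neq0 : padic1 != padic0.
Proof.
apply/eqP => /(congr1 (fun x => padic_seq x 0)) /=.
have lt1 : (1 < pmod 0)%R by rewrite /pmod /padic_base expn1 ltz_nat.
by rewrite modz_small ?lt1 // modz_small ?lt1 // => /eqP; rewrite oner_eq0.
Qed.

HB.instance Definition _ := GRing.Zmodule_isComNzRing.Build padic
  padic_mulA padic_mulC padic_mul1 padic_mulDl padic1_neq0.

(* Units and inverses, defined classically (the inverse is any two-sided  *)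
(* inverse, chosen by the choice axiom; it is unique in a ring).          *)
Definition padic_unit : {pred padic} :=
  fun x => `[< exists y : padic, (y * x = 1)%R >].
Definition padic_inv (x : padic) : padic :=
  match pselect (exists y : padic, (y * x = 1)%R) with
  | left e => projT1 (cid e)
  | right _ => x
  end.

Lemma padic_mulVx : {in padic_unit, left_inverse 1%R padic_inv *%R}.
Proof.
move=> x /asboolP ux; rewrite /padic_inv.
case: pselect => // e; exact: (projT2 (cid e)).
Qed.

Lemma padic_unitPl (x y : padic) : (y * x = 1)%R -> padic_unit x.
Proof. by move=> e; apply/asboolP; exists y. Qed.

Lemma padic_inv_out : {in [predC padic_unit], padic_inv =1 id}.
Proof.
move=> x; rewrite inE /= => /asboolPn nx; rewrite /padic_inv.
by case: pselect.
Qed.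

HB.instance Definition _ := GRing.ComNzRing_hasMulInverse.Build padic
  padic_mulVx padic_unitPl padic_inv_out.

End PAdic.

Local Open Scope classical_set_scope.

Definition padic_dvd (p i : nat) (x : padic p) : Prop :=
  exists y : padic p, x = ((p ^ i)%N)%:R * y.

Arguments padic_dvd : clear implicits.
Definition CS (i d p : nat) : set 'M[padic p]_d :=
  [set A | forall j k : 'I_d, @padic_dvd p i ((A - 1%:M) j k)].

Section Groups.
Variables (p d : nat).
Local Notation M := 'M[padic p]_d.

Definition is_subgroup (H : set M) : Prop :=
  [/\ H 1%:M,
      (forall a b, H a -> H b -> H (a *m b)) &
      (forall a, H a -> a \in unitmx /\ H (invmx a))].

Definition gen_subgroup (S : set M) : set M :=
  [set x | forall H, is_subgroup H -> S `<=` H -> H x].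

Definition mx_commutator (a b : M) : M := a *m b *m invmx a *m invmx b.

Definition commutator_subgroup (A B : set M) : set M :=
  gen_subgroup [set c | exists a b, [/\ A a, B b & c = mx_commutator a b]].

Definition power_subgroup (n : nat) (A : set M) : set M :=
  gen_subgroup [set c | exists a, A a /\ c = iter n (mulmx a) 1%:M].

Definition normal_subgroup (N G : set M) : Prop :=
  [/\ is_subgroup N, N `<=` G &
      (forall g n, G g -> N n -> N (g *m n *m invmx g))].

End Groups.
Arguments CS i d p : clear implicits.

From HB Require Import structures.
From mathcomp Require Import all_boot all_order all_algebra.
From mathcomp Require Import boolp classical_sets.
From mathcomp Require Import zify.

(* Everything is a congruence modulo p^n.  Write A ~ 1 mod p^m and B ~ 1 mod
   p^n.  Then [A, B] - 1 = (AB - BA) A^-1 B^-1 and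
   AB - BA = (A - 1)(B - 1) - (B - 1)(A - 1), so [A, B] ~ 1 mod p^(m+n);
   and by the binomial theorem (1 + X)^p ~ 1 + pX mod p^(2n) when
   X ~ 0 mod p^n, so CS(n)^p <= CS(n+1).  With Gamma*_i = CS(u + ceil(log_p i))
   the inclusions of the theorem then reduce to
   ceil(log_p (i + j)) <= ceil(log_p i) + ceil(log_p j) + 1 and
   ceil(log_p (i p)) = ceil(log_p i) + 1.  That CS(n), n >= 1, consists of
   invertible matrices comes from det A ~ 1 mod p and from the geometric series
   inverting 1 - q for q ~ 0 mod p, whose partial sums converge in Z_p. *)

Import GRing.Theory.
Local Open Scope classical_set_scope.

Section PadicDivisibility.
Local Set Implicit Arguments. Local Unset Strict Implicit.
Local Open Scope ring_scope.
Variable p : nat.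
Local Notation pdvd := (padic_dvd p).

Lemma padic_dvd0 n : pdvd n 0.
Proof. by exists 0; rewrite mulr0. Qed.

Lemma padic_dvd_exp0 x : pdvd 0 x.
Proof. by exists x; rewrite mul1r. Qed.

Lemma padic_dvdD n x y : pdvd n x -> pdvd n y -> pdvd n (x + y).
Proof. by move=> [a ->] [b ->]; exists (a + b); rewrite mulrDr. Qed.

Lemma padic_dvdN n x : pdvd n x -> pdvd n (- x).
Proof. by move=> [a ->]; exists (- a); rewrite mulrN. Qed.

Lemma padic_dvdMl n x y : pdvd n y -> pdvd n (x * y).
Proof. by move=> [a ->]; exists (x * a); rewrite mulrCA. Qed.

Lemma padic_dvdMr n x y : pdvd n x -> pdvd n (x * y).
Proof. by rewrite mulrC; apply: padic_dvdMl. Qed.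

Lemma padic_dvdM m n x y : pdvd m x -> pdvd n y -> pdvd (m + n) (x * y).
Proof.
by move=> [a ->] [b ->]; exists (a * b); rewrite expnD natrM mulrACA.
Qed.

Lemma padic_dvd_leq m n x : (m <= n)%N -> pdvd n x -> pdvd m x.
Proof.
move=> /subnKC <- [a ->]; exists ((p ^ (n - m))%:R * a).
by rewrite expnD natrM mulrA.
Qed.

Lemma padic_dvd_mulrn n x : pdvd n x -> pdvd n.+1 (x *+ p).
Proof.
by move=> [a ->]; exists a; rewrite -[_ *+ p]mulr_natr expnSr natrM mulrAC.
Qed.

Lemma padic_dvdX n x : pdvd 1 x -> pdvd n (x ^+ n).
Proof.
move=> dx; elim: n => [|n IHn]; first by exists 1; rewrite mulr1.
by rewrite exprS -add1n; apply: padic_dvdM.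
Qed.

Lemma padic_dvd_subM n x1 x2 y1 y2 :
  pdvd n (x1 - x2) -> pdvd n (y1 - y2) -> pdvd n (x1 * y1 - x2 * y2).
Proof.
move=> dx dy; rewrite -[x1 * y1](subrK (x2 * y1)) -mulrBl -addrA -mulrBr.
by apply: padic_dvdD; [apply: padic_dvdMr | apply: padic_dvdMl].
Qed.

Lemma padic_dvd_subD n x1 x2 y1 y2 :
  pdvd n (x1 - x2) -> pdvd n (y1 - y2) -> pdvd n ((x1 + y1) - (x2 + y2)).
Proof. by rewrite opprD addrACA; apply: padic_dvdD. Qed.

End PadicDivisibility.

Section PadicDigits.
Local Set Implicit Arguments. Local Unset Strict Implicit.
Local Open Scope ring_scope.
Variable p : nat.
Hypothesis p_gt1 : (1 < p)%N.
Local Notation pdvd := (padic_dvd p).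

Lemma padic_seqD (x y : padic p) n :
  padic_seq (x + y) n = modz (padic_seq x n + padic_seq y n) (pmod p n).
Proof. by []. Qed.

Lemma padic_seqM (x y : padic p) n :
  padic_seq (x * y) n = modz (padic_seq x n * padic_seq y n) (pmod p n).
Proof. by []. Qed.

Lemma padic_seq_natr k n : padic_seq (k%:R : padic p) n = modz k (pmod p n).
Proof.
elim: k => [|k IHk] //.
by rewrite mulrS padic_seqD IHk modzDm -addn1 PoszD addrC.
Qed.

Lemma padic_baseE : padic_base p = p.
Proof. by rewrite /padic_base; case: p p_gt1 => [|[]]. Qed.

Lemma padic_seq_eq0 n x : pdvd n.+1 x -> padic_seq x n = 0.
Proof.
move=> [a ->]; rewrite padic_seqM padic_seq_natr /pmod padic_baseE.
by rewrite modzz mul0r mod0z.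
Qed.

Lemma padic_seq_congr n x y :
  pdvd n.+1 (x - y) -> padic_seq x n = padic_seq y n.
Proof.
move=> /padic_seq_eq0 dxy.
by rewrite -(subrK y x) padic_seqD dxy add0r padic_mod.
Qed.

Lemma padic_lim (s : nat -> padic p) :
  (forall n, pdvd n.+1 (s n.+1 - s n)) ->
  exists w : padic p, forall n, padic_seq w n = padic_seq (s n) n.
Proof.
move=> s_cauchy.
have sC : compat p (fun n => padic_seq (s n) n).
  move=> n; rewrite (padic_compat (s n.+1) n) !padic_mod.
  exact/padic_seq_congr/s_cauchy.
by exists (mk_padic sC) => n /=; rewrite padic_mod.
Qed.

Lemma padic_unit_congr1 (x : padic p) : pdvd 1 (x - 1) -> x \is a GRing.unit.
Proof.
move=> dx; pose q := 1 - x.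
have dq : pdvd 1 q by rewrite /q -opprB; apply: padic_dvdN.
pose s n := \sum_(i < n.+1) q ^+ i.
have xs n : x * s n = 1 - q ^+ n.+1.
  by rewrite -opprB subrX1 -mulNr opprB subKr.
have s_cauchy n : pdvd n.+1 (s n.+1 - s n).
  by rewrite /s big_ord_recr /= addrAC subrr add0r; apply: padic_dvdX.
have [w sw] := padic_lim s_cauchy.
apply/unitrP; exists w; suff xw : x * w = 1 by rewrite mulrC xw.
apply: padic_ext => n; rewrite padic_seqM sw -padic_seqM.
apply: padic_seq_congr; rewrite xs addrAC subrr add0r.
exact/padic_dvdN/padic_dvdX.
Qed.

End PadicDigits.

Section MatrixDivisibility.
Local Set Implicit Arguments. Local Unset Strict Implicit.
Local Open Scope ring_scope.
Variable p : nat.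
Local Notation pdvd := (padic_dvd p).

Definition mxdvd n m k (A : 'M[padic p]_(m, k)) := forall i j, pdvd n (A i j).

Lemma det_congr n d (A B : 'M[padic p]_d) :
  mxdvd n (A - B) -> pdvd n (\det A - \det B).
Proof.
move=> dAB; apply: (big_ind2 (fun x y => pdvd n (x - y))).
- by rewrite subrr; apply: padic_dvd0.
- by move=> *; apply: padic_dvd_subD.
move=> s _; rewrite -mulrBr; apply: padic_dvdMl.
apply: (big_ind2 (fun x y => pdvd n (x - y))).
- by rewrite subrr; apply: padic_dvd0.
- by move=> *; apply: padic_dvd_subM.
by move=> i _; set j := (X in A i X); have := dAB i j; rewrite !mxE.
Qed.

Variables m k l : nat.
Implicit Types (A B : 'M[padic p]_(m, k)) (C : 'M[padic p]_(k, l)).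

Lemma mxdvd0 n : mxdvd n (0 : 'M_(m, k)).
Proof. by move=> i j; rewrite mxE; apply: padic_dvd0. Qed.

Lemma mxdvdD n A B : mxdvd n A -> mxdvd n B -> mxdvd n (A + B).
Proof. by move=> dA dB i j; rewrite mxE; apply: padic_dvdD. Qed.

Lemma mxdvdN n A : mxdvd n A -> mxdvd n (- A).
Proof. by move=> dA i j; rewrite mxE; apply: padic_dvdN. Qed.

Lemma mxdvdB n A B : mxdvd n A -> mxdvd n B -> mxdvd n (A - B).
Proof. by move=> dA /mxdvdN; apply: mxdvdD. Qed.

Lemma mxdvd_mulrn n A : mxdvd n A -> mxdvd n.+1 (A *+ p).
Proof. by move=> dA i j; rewrite mulmxnE; apply: padic_dvd_mulrn. Qed.

Lemma mxdvd_leq n1 n2 A : (n1 <= n2)%N -> mxdvd n2 A -> mxdvd n1 A.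
Proof. by move=> le_n dA i j; apply: padic_dvd_leq le_n _. Qed.

Lemma mxdvd_mulmx n1 n2 A C :
  mxdvd n1 A -> mxdvd n2 C -> mxdvd (n1 + n2) (A *m C).
Proof.
move=> dA dC i j; rewrite mxE; apply: (big_ind (pdvd _)).
- exact: padic_dvd0.
- exact: padic_dvdD.
by move=> r _; apply: padic_dvdM.
Qed.

Lemma mxdvd_mulmxl n A C : mxdvd n C -> mxdvd n (A *m C).
Proof.
move=> dC; rewrite -[n]add0n; apply: mxdvd_mulmx dC => i j.
exact: padic_dvd_exp0.
Qed.

Lemma mxdvd_mulmxr n A C : mxdvd n A -> mxdvd n (A *m C).
Proof.
move=> dA; rewrite -[n]addn0; apply: mxdvd_mulmx dA _ => i j.
exact: padic_dvd_exp0.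
Qed.

End MatrixDivisibility.

Lemma commr_subr1 (R : pzRingType) (a b : R) :
  (a * b - b * a = (a - 1) * (b - 1) - (b - 1) * (a - 1))%R.
Proof.
have expand (x y : R) :
    ((x + 1) * (y + 1) - (y + 1) * (x + 1) = x * y - y * x)%R.
  rewrite mulrDl !mulrDr mulrDl !mul1r !mulr1 (addrC y) opprD addrACA.
  by rewrite subrr addr0 opprD addrACA subrr addr0.
by have := expand (a - 1)%R (b - 1)%R; rewrite !subrK.
Qed.

Lemma gen_subgroup_sub (p d : nat) (S H : set 'M[padic p]_d) :
  is_subgroup H -> S `<=` H -> gen_subgroup S `<=` H.
Proof. by move=> sgH sSH x; apply. Qed.

Lemma up_logD p i j :
  (1 < p)%N -> (up_log p (i + j) <= (up_log p i + up_log p j).+1)%N.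
Proof.
move=> p_gt1; apply: up_log_min => //.
have := up_logP i p_gt1; have := up_logP j p_gt1.
have : (0 < p ^ up_log p i)%N by rewrite expn_gt0 ltnW.
have : (0 < p ^ up_log p j)%N by rewrite expn_gt0 ltnW.
rewrite expnS expnD; move: (p ^ up_log p i)%N (p ^ up_log p j)%N => a b.
move=> b_gt0 a_gt0 le_j le_i; apply: leq_trans (leq_add le_i le_j) _.
have le_ab : (a + b <= 2 * (a * b))%N by nia.
by apply: leq_trans le_ab _; rewrite leq_mul2r p_gt1 orbT.
Qed.

Section CongruenceSubgroups.
Local Set Implicit Arguments. Local Unset Strict Implicit.
Local Open Scope ring_scope.
Variables p d : nat.
Hypothesis p_gt1 : (1 < p)%N.
Local Notation M := 'M[padic p]_d.

Lemma CS_unitmx n (A : M) : (0 < n)%N -> CS n d p A -> A \in unitmx.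
Proof.
move=> n_gt0 dA; rewrite unitmxE; apply: padic_unit_congr1 => //.
by have := det_congr dA; rewrite det1; apply: padic_dvd_leq.
Qed.

Lemma CS_subgroup n : (0 < n)%N -> is_subgroup (CS n d p).
Proof.
move=> n_gt0; split=> [|a b da db|a da].
- by rewrite /CS /= subrr; apply: mxdvd0.
- rewrite /CS /= -[a *m b](subrK b) -{2}[b]mul1mx -mulmxBl -addrA.
  by apply: mxdvdD => //; apply: mxdvd_mulmxr.
have ua := CS_unitmx n_gt0 da; split=> //.
rewrite /CS /=; have -> : invmx a - 1%:M = - ((a - 1%:M) *m invmx a).
  by rewrite mulmxBl mul1mx mulmxV // opprB.
exact/mxdvdN/mxdvd_mulmxr.
Qed.

Lemma CS_subset m n : (m <= n)%N -> CS n d p `<=` CS m d p.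
Proof. by move=> le_mn A; apply: mxdvd_leq. Qed.

Lemma CS_normal m n :
  (0 < m)%N -> (m <= n)%N -> normal_subgroup (CS n d p) (CS m d p).
Proof.
move=> m_gt0 le_mn; split; first exact: CS_subgroup (leq_trans m_gt0 le_mn).
  exact: CS_subset.
move=> g a dg da; have ug := CS_unitmx m_gt0 dg; rewrite /CS /=.
have -> : g *m a *m invmx g - 1%:M = g *m (a - 1%:M) *m invmx g.
  by rewrite mulmxBr mulmx1 mulmxBl mulmxV.
exact/mxdvd_mulmxr/mxdvd_mulmxl.
Qed.

Lemma mx_commutator_CS m n a b : (0 < m)%N -> (0 < n)%N ->
  CS m d p a -> CS n d p b -> CS (m + n) d p (mx_commutator a b).
Proof.
move=> m_gt0 n_gt0 da db; rewrite /CS /= /mx_commutator.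
have ua := CS_unitmx m_gt0 da; have ub := CS_unitmx n_gt0 db.
have -> : a *m b *m invmx a *m invmx b - 1%:M =
          (a *m b - b *m a) *m invmx a *m invmx b.
  by rewrite !mulmxBl -(mulmxA b a) mulmxV // mulmx1 mulmxV.
rewrite [a *m b - _](commr_subr1 _ a b) -idmxE.
apply/mxdvd_mulmxr/mxdvd_mulmxr/mxdvdB; first exact: mxdvd_mulmx.
by rewrite addnC; apply: mxdvd_mulmx.
Qed.

Lemma iter_mulmx (a : M) k : iter k (mulmx a) 1%:M = a ^+ k.
Proof. by elim: k => //= k ->; rewrite exprS. Qed.

Lemma mxdvd_exprD1_subr1 n (X : M) :
  (0 < n)%N -> mxdvd n X -> mxdvd n.+1 ((X + 1) ^+ p - 1).
Proof.
move=> n_gt0 dX; have p_gt0 := ltnW p_gt1.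
rewrite exprD1n -(big_mkord xpredT (fun i => X ^+ i *+ 'C(p, i))).
rewrite big_ltn // big_ltn ?ltnS // expr0 expr1 bin0 bin1 addrAC subrr add0r.
apply: mxdvdD; first exact: mxdvd_mulrn.
rewrite big_nat_cond.
apply: (big_ind (@mxdvd p n.+1 d d)) => [|Y Z|i /andP[/andP[le2i _] _]].
- exact: mxdvd0.
- exact: mxdvdD.
rewrite -(subnKC le2i) exprD -mulrnAr; apply: mxdvd_mulmxr.
rewrite expr2; apply: mxdvd_leq (mxdvd_mulmx dX dX).
by rewrite -addn1 leq_add2l.
Qed.

Lemma CS_expr n (a : M) : (0 < n)%N -> CS n d p a -> CS n.+1 d p (a ^+ p).
Proof.
move=> n_gt0 da; rewrite /CS /= -[a](subrK (1 : M)) idmxE.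
exact: mxdvd_exprD1_subr1.
Qed.

Lemma CS_commutator_subgroup m n : (0 < m)%N -> (0 < n)%N ->
  commutator_subgroup (CS m d p) (CS n d p) `<=` CS (m + n) d p.
Proof.
move=> m_gt0 n_gt0; apply: gen_subgroup_sub.
  by apply: CS_subgroup; rewrite addn_gt0 m_gt0.
by move=> _ [a [b [da db ->]]]; apply: mx_commutator_CS.
Qed.

Lemma CS_power_subgroup n : (0 < n)%N ->
  power_subgroup p (CS n d p) `<=` CS n.+1 d p.
Proof.
move=> n_gt0; apply: gen_subgroup_sub; first exact: CS_subgroup.
by move=> _ [a [da ->]]; rewrite iter_mulmx; apply: CS_expr.
Qed.

End CongruenceSubgroups.

Theorem lemma3p1 (p d u : nat) :
  prime p -> (0 < d)%N -> (0 < u)%N -> (p = 2%N -> (2 <= u)%N) ->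
  let Gamma := CS u d p in
  let GammaS := fun i : nat => CS (u + (up_log p i).+1 - 1) d p in
  [/\ GammaS 1%N = Gamma,
      (forall i, (0 < i)%N -> GammaS i.+1 `<=` GammaS i),
      (forall i, (0 < i)%N -> normal_subgroup (GammaS i) Gamma),
      (forall i j, (0 < i)%N -> (0 < j)%N ->
         commutator_subgroup (GammaS i) (GammaS j) `<=` GammaS (i + j)%N) &
      (forall i, (0 < i)%N -> power_subgroup p (GammaS i) `<=` GammaS (i * p)%N)].
Proof.
move=> p_prime _ u_gt0 _ Gamma GammaS.
have p_gt1 := prime_gt1 p_prime.
have GammaSE i : GammaS i = CS (u + up_log p i) d p.
  by rewrite /GammaS addnS subn1.
have level_gt0 i : (0 < u + up_log p i)%N by rewrite addn_gt0 u_gt0.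
split.
- by rewrite GammaSE up_log1 addn0.
- move=> i _; rewrite !GammaSE; apply: CS_subset.
  by rewrite leq_add2l leq_up_log.
- by move=> i _; rewrite GammaSE; apply: CS_normal; rewrite ?leq_addr.
- move=> i j _ _ A; rewrite !GammaSE.
  move/(CS_commutator_subgroup p_gt1 (level_gt0 i) (level_gt0 j)).
  apply: CS_subset.
  by have := up_logD p i j p_gt1; clear -u_gt0; lia.
- move=> i i_gt0; rewrite !GammaSE mulnC up_logMp // addnS.
  exact: CS_power_subgroup.
Qed.
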